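(* Let $m\le n$ and let $\bm W\in\mathbb{R}^{m\times n}$ be a (deterministic) matrix with $\bm W\bm W^T=\bm I_m$ and $\bm\xi_m^T\bm W\bm\xi_n=1$. Let $\bm x\in\mathbb{R}^n$ be a random vector with $\mathbb{E}[\bm x]=\mu\bm 1_n$ and $\operatorname{Cov}[\bm x]=\sigma^2\bm I_n$, where $\mu\in\mathbb{R}$ and $\sigma>0$. Then \[ \mathbb{E}[\bm W\bm x]=\mu\sqrt{\tfrac nm}\,\bm 1_m,\qquad \operatorname{Cov}[\bm W\bm x]=\sigma^2\bm I_m. \]
   Context: $\bm 1_k$ denotes the all-ones vector in $\mathbb{R}^k$ and $\bm\xi_k=\frac{1}{\sqrt k}\bm 1_k$. *)

From HB Require Import structures.
From mathcomp Require Import all_boot all_order all_algebra.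
From mathcomp Require Import all_classical all_reals all_analysis.
Set Implicit Arguments. Unset Strict Implicit. Unset Printing Implicit Defensive.
Import Order.TTheory GRing.Theory Num.Theory.
Local Open Scope ring_scope.

Definition ones_cV (R : realType) (k : nat) : 'cV[R]_k := const_mx 1.

Definition xi (R : realType) (k : nat) : 'cV[R]_k :=
  (Num.sqrt (k%:R : R))^-1 *: ones_cV R k.

Definition mxRV d (T : measurableType d) (R : realType) (m n : nat)
  (W : 'M[R]_(m, n)) (x : 'I_n -> T -> R) : 'I_m -> T -> R :=
  fun k t => \sum_(j < n) W k j * x j t.

(* Linearity of expectation and bilinearity of covariance give
   E[(Wx)_k] = mu r_k, with r_k the k-th row sum of W, and
   Cov[(Wx)_k, (Wx)_l] = sigma^2 <W_k, W_l> = sigma^2 delta_kl.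
   It remains to see that every r_k equals c = sqrt(n/m).  The rows of W are
   orthonormal, so Bessel's inequality gives sum_k r_k^2 <= |1_n|^2 = n, while
   the condition on xi says sum_k r_k = sqrt(m n).  Thus the r_k have mean c
   and mean square at most c^2, which forces r_k = c. *)

From mathcomp Require Import all_boot all_order all_algebra.
From mathcomp Require Import all_classical all_reals all_analysis.
From mathcomp Require Import ring lra.
Import Order.TTheory GRing.Theory Num.Theory.
Local Open Scope ring_scope.

Section linear_combinations.
Context {R : realType} {d : measure_display} {T : measurableType d}.
Context (P : probability T R) {I : Type} {X : I -> T -> R}.
Hypothesis X2 : forall i, X i \in Lfun P 2%:E.

Let one_le_two : (1 <= 2%:E :> \bar R)%E.
Proof. by rewrite lee_fin ler1n. Qed.

Let Lfun2_Lfun1 (f : T -> R) : f \in Lfun P 2%:E -> f \in Lfun P 1.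
Proof. exact/Lfun_subset12/fin_num_measure. Qed.

Lemma Lfun2_lincomb (s : seq I) (a : I -> R) :
  \sum_(i <- s) a i \o* X i \in Lfun P 2%:E.
Proof. by apply: rpred_sum => i _; apply: Lfun_scale. Qed.

Lemma expectation_lincomb (s : seq I) (a e : I -> R) :
  (forall i, 'E_P[X i] = (e i)%:E)%E ->
  'E_P[\sum_(i <- s) a i \o* X i]%E = (\sum_(i <- s) a i * e i)%:E.
Proof.
move=> EX; elim: s => [|i s IHs]; first by rewrite !big_nil expectation_cst.
rewrite !big_cons expectationD ?Lfun2_Lfun1 ?Lfun_scale ?Lfun2_lincomb // IHs.
by rewrite expectationZl ?Lfun2_Lfun1 // EX EFinD EFinM.
Qed.

Lemma covariance_lincombl (s : seq I) (a c : I -> R) (Z : T -> R) :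
  Z \in Lfun P 2%:E -> (forall i, covariance P (X i) Z = (c i)%:E) ->
  covariance P (\sum_(i <- s) a i \o* X i) Z = (\sum_(i <- s) a i * c i)%:E.
Proof.
move=> Z2 covXZ; elim: s => [|i s IHs].
  by rewrite !big_nil covariance_cst_l.
rewrite !big_cons covarianceDl ?Lfun_scale ?Lfun2_lincomb // IHs.
rewrite covarianceZl ?Lfun2_mul_Lfun1 ?Lfun2_Lfun1 //.
by rewrite covXZ EFinD EFinM.
Qed.

Lemma covariance_lincomb (s r : seq I) (a b : I -> R) (c : I -> I -> R) :
  (forall i j, covariance P (X i) (X j) = (c i j)%:E) ->
  covariance P (\sum_(i <- s) a i \o* X i) (\sum_(j <- r) b j \o* X j)
  = (\sum_(i <- s) \sum_(j <- r) a i * b j * c i j)%:E.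
Proof.
move=> covX.
have c_sym i j : c j i = c i j by apply: EFin_inj; rewrite -!covX covarianceC.
have covXY i : covariance P (X i) (\sum_(j <- r) b j \o* X j)
               = (\sum_(j <- r) b j * c i j)%:E.
  rewrite covarianceC (covariance_lincombl _ _ (c^~ i)) //.
  by under eq_bigr do rewrite c_sym.
rewrite (covariance_lincombl _ _ _ _ (Lfun2_lincomb _ _) covXY); congr (_%:E).
by apply: eq_bigr => i _; rewrite mulr_sumr; apply: eq_bigr => j _; rewrite mulrA.
Qed.

End linear_combinations.

Lemma sum_mul_delta {R : pzSemiRingType} {I : finType} (F : I -> R) (k : I) :
  \sum_l F l * (k == l)%:R = F k.
Proof.
rewrite (bigD1 k) //= eqxx mulr1 big1 ?addr0 // => l.
by rewrite eq_sym => /negPf ->; rewrite mulr0.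
Qed.

Lemma dot_rows_orthonormal {R : pzRingType} {m n : nat} (W : 'M[R]_(m, n)) :
  W *m W^T = 1%:M -> forall k l, \sum_j W k j * W l j = (k == l)%:R.
Proof.
move=> WWt k l; have := congr1 (fun M : 'M[R]_m => M k l) WWt.
by rewrite !mxE => <-; apply: eq_bigr => j _; rewrite mxE.
Qed.

Lemma bessel_orthonormal_rows {R : realFieldType} {m n : nat} (W : 'M[R]_(m, n))
    (v : 'I_n -> R) :
  W *m W^T = 1%:M -> \sum_k (\sum_j W k j * v j) ^+ 2 <= \sum_j v j ^+ 2.
Proof.
move=> /dot_rows_orthonormal WW.
pose r k := \sum_j W k j * v j.
(* [s] is the orthogonal projection of [v] onto the row space of [W]. *)
pose s j := \sum_k r k * W k j.
have dot_s u : \sum_j u j * s j = \sum_k r k * \sum_j W k j * u j.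
  under eq_bigr do rewrite mulr_sumr; rewrite exchange_big /=.
  by apply: eq_bigr => k _; rewrite mulr_sumr; apply: eq_bigr => j _; ring.
have Ws k : \sum_j W k j * s j = r k.
  under eq_bigr do rewrite mulr_sumr; rewrite exchange_big /=.
  rewrite -[RHS](sum_mul_delta r k); apply: eq_bigr => l _.
  by rewrite -WW mulr_sumr; apply: eq_bigr => j _; ring.
have vs : \sum_j v j * s j = \sum_k r k ^+ 2.
  by rewrite dot_s; apply: eq_bigr => k _; rewrite expr2.
have ss : \sum_j s j ^+ 2 = \sum_k r k ^+ 2.
  under eq_bigr do rewrite expr2.
  by rewrite dot_s; apply: eq_bigr => k _; rewrite Ws expr2.
have : 0 <= \sum_j (v j - s j) ^+ 2 by apply: sumr_ge0 => j _; exact: sqr_ge0.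
under eq_bigr do rewrite sqrrB.
rewrite !big_split /= sumrN sumrMnl vs ss; lra.
Qed.

Lemma eq_mean_of_sum_sqr_le {R : realFieldType} {I : finType} (r : I -> R) (c : R) :
  \sum_i r i = #|I|%:R * c -> \sum_i r i ^+ 2 <= #|I|%:R * c ^+ 2 ->
  forall i, r i = c.
Proof.
move=> sum_r sum_r2.
have dev_le0 : \sum_i (r i - c) ^+ 2 <= 0.
  under eq_bigr do rewrite sqrrB.
  rewrite !big_split /= sumrN sumrMnl -mulr_suml sum_r sumr_const -mulr_natl.
  lra.
have dev0 : \sum_i (r i - c) ^+ 2 = 0.
  by apply/eqP; rewrite eq_le dev_le0 sumr_ge0 // => i _; exact: sqr_ge0.
move=> i; apply/eqP; rewrite -subr_eq0 -sqrf_eq0; apply/eqP.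
by move/psumr_eq0P: dev0 => -> // j _; exact: sqr_ge0.
Qed.

Lemma xiT_mul_xi {R : realType} {m n : nat} (W : 'M[R]_(m, n)) :
  ((xi R m)^T *m W *m xi R n) ord0 ord0
  = (Num.sqrt m%:R * Num.sqrt n%:R)^-1 * \sum_k \sum_j W k j.
Proof.
rewrite mxE exchange_big mulr_sumr; apply: eq_bigr => j _.
rewrite !mxE mulr_suml mulr_sumr; apply: eq_bigr => k _.
by rewrite !mxE !mulr1 invfM; ring.
Qed.

Lemma row_sum_orthonormal {R : realType} {m n : nat} (W : 'M[R]_(m, n)) :
  W *m W^T = 1%:M -> (xi R m)^T *m W *m xi R n = 1%:M ->
  forall k, \sum_j W k j = Num.sqrt (n%:R / m%:R).
Proof.
move=> WWt Wxi.
set sm := Num.sqrt (m%:R : R); set sn := Num.sqrt (n%:R : R).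
set c := Num.sqrt (n%:R / m%:R).
have total : (sm * sn)^-1 * \sum_k \sum_j W k j = 1.
  by rewrite -xiT_mul_xi Wxi mxE.
have smn0 : sm * sn != 0.
  apply/eqP => smn0; move: total; rewrite smn0 invr0 mul0r => /eqP.
  by rewrite eq_sym oner_eq0.
have m0 : m%:R != 0 :> R.
  by apply: contraNneq smn0 => m0; rewrite /sm m0 sqrtr0 mul0r.
have sum_W : \sum_k \sum_j W k j = sm * sn.
  by apply: (mulfI (invr_neq0 smn0)); rewrite total mulVf.
have mc : m%:R * c = sm * sn.
  have -> : sn = sm * c by rewrite -sqrtrM // mulrC divfK.
  by rewrite mulrA -expr2 sqr_sqrtr.
have mc2 : m%:R * c ^+ 2 = n%:R.
  by rewrite sqr_sqrtr ?divr_ge0 // mulrC divfK.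
apply: eq_mean_of_sum_sqr_le; rewrite card_ord ?sum_W ?mc // mc2.
have := bessel_orthonormal_rows W (fun=> 1) WWt.
rewrite expr1n sumr_const card_ord.
by under eq_bigr do under eq_bigr do rewrite mulr1.
Qed.

Lemma mxRVE d (T : measurableType d) (R : realType) m n (W : 'M[R]_(m, n))
    (x : 'I_n -> T -> R) k :
  mxRV W x k = \sum_j W k j \o* x j.
Proof.
by rewrite fct_sumE; apply/funext => t; apply: eq_bigr => j _; rewrite mulrC.
Qed.

Theorem proposition3 (R : realType) (d : measure_display) (T : measurableType d)
  (P : probability T R) (m n : nat) (W : 'M[R]_(m, n))
  (x : 'I_n -> T -> R) (mu sigma : R) :
  (m <= n)%N ->
  W *m W^T = 1%:M ->
  (xi R m)^T *m W *m xi R n = 1%:M ->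
  (forall i, x i \in Lfun P 2%:E) ->
  (forall i, 'E_P[x i] = mu%:E)%E ->
  (forall i j, covariance P (x i) (x j) = (sigma ^+ 2 * (i == j)%:R)%:E) ->
  0 < sigma ->
  (forall k, 'E_P[mxRV W x k] = (mu * Num.sqrt (n%:R / m%:R))%:E)%E /\
  (forall k l, covariance P (mxRV W x k) (mxRV W x l)
                 = (sigma ^+ 2 * (k == l)%:R)%:E).
Proof.
move=> _ WWt Wxi x2 Ex covx _.
split=> [k|k l]; rewrite !mxRVE.
  rewrite (expectation_lincomb P x2 _ _ _ Ex).
  by rewrite -mulr_suml row_sum_orthonormal // mulrC.
rewrite (covariance_lincomb P x2 _ _ _ _ _ covx).
congr (_%:E); rewrite -(dot_rows_orthonormal W WWt) mulr_sumr.
apply: eq_bigr => i _; under eq_bigr do rewrite mulrA.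
by rewrite sum_mul_delta mulrC.
Qed.
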